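(* Under Assumption (A), there exists an integer $N$ such that for all $n\ge N$, $\mathbb E_\pi[1/A]\le 2/\delta$, where the expectation is over $x=(A,\mu,\theta_1,\dots,\theta_n)\sim\pi$.
   Context: Fix $V>0$, $a>0$, $b_0>0$. For each $n\ge2$ observed data $Y_1,\dots,Y_n\in\mathbb R$ are given; $\bar Y=\frac1n\sum_iY_i$, $\Delta=\Delta_n=\sum_{i=1}^n(Y_i-\bar Y)^2$. Model: $Y_i\mid\theta_i\sim\mathcal N(\theta_i,V)$, $\theta_i\mid\mu,A\sim\mathcal N(\mu,A)$ independently ($1\le i\le n$), flat prior on $\mu\in\mathbb R$, $A\sim\mathrm{IG}(a,b_0)$ (density $\propto A^{-a-1}e^{-b_0/A}$ on $(0,\infty)$). The posterior $\pi$ on $\mathcal X=(0,\infty)\times\mathbb R\times\mathbb R^n$, $x=(A,\mu,\theta_1,\dots,\theta_n)$, has density $\propto A^{-a-1}e^{-b_0/A}\prod_{i=1}^n A^{-1/2}e^{-(\theta_i-\mu)^2/(2A)}e^{-(Y_i-\theta_i)^2/(2V)}$. Assumption (A): there are $\delta>0$, $M<\infty$ and an integer $N_0$ with $\frac{\Delta_n}{n-1}\le M$ for all $n$ and $\frac{\Delta_n}{n-1}\ge V+\delta$ for all $n\ge N_0$. *)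

From Stdlib Require Import Reals Lra Lia.
Open Scope R_scope.

Fixpoint sumR (k : nat) (f : nat -> R) : R :=
  match k with O => 0 | S k' => sumR k' f + f k' end.
Fixpoint prodR (k : nat) (f : nat -> R) : R :=
  match k with O => 1 | S k' => prodR k' f * f k' end.

(* Data: Y n i is the i-th observation (i < n) of the n-th data set. *)
Definition Ybar (Y : nat -> nat -> R) (n : nat) : R := sumR n (Y n) / INR n.
Definition DeltaY (Y : nat -> nat -> R) (n : nat) : R :=
  sumR n (fun i => (Y n i - Ybar Y n) ^ 2).

Definition imp_int_R (f : R -> R) (l : R) : Prop :=
  (forall a b, inhabited (Riemann_integrable f a b)) /\
  forall eps, 0 < eps -> exists M, forall a b (pr : Riemann_integrable f a b),
    a <= - M -> M <= b -> Rabs (RiemannInt pr - l) < eps.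

Definition imp_int_pos (f : R -> R) (l : R) : Prop :=
  (forall a b, 0 < a -> a <= b -> inhabited (Riemann_integrable f a b)) /\
  forall eps, 0 < eps -> exists d, 0 < d /\ exists M,
    forall a b (pr : Riemann_integrable f a b),
      0 < a -> a <= d -> M <= b -> Rabs (RiemannInt pr - l) < eps.

Definition upd (th : nat -> R) (j : nat) (t : R) : nat -> R :=
  fun i => if Nat.eqb i j then t else th i.

(* iter_int k F l : the iterated improper integral of F over
   (theta_0, ..., theta_{k-1}) in R^k equals l. *)
Fixpoint iter_int (k : nat) (F : (nat -> R) -> R) (l : R) : Prop :=
  match k with
  | O => F (fun _ => 0) = l
  | S k' => exists g : R -> R,
      (forall t, iter_int k' (fun th => F (upd th k' t)) (g t)) /\ imp_int_R g l
  end.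

(* Integral over X = (0,oo) x R x R^n of F(A, mu, theta), as an iterated
   improper Riemann integral (A outermost, then mu, then theta). *)
Definition post_int (n : nat) (F : R -> R -> (nat -> R) -> R) (l : R) : Prop :=
  exists h : R -> R,
    (forall A, 0 < A -> exists g : R -> R,
        (forall mu, iter_int n (fun th => F A mu th) (g mu)) /\ imp_int_R g (h A))
    /\ imp_int_pos h l.

(* Unnormalised posterior density pi(A, mu, theta_1..theta_n). *)
Definition post_dens (V a b0 : R) (Y : nat -> nat -> R) (n : nat)
    (A mu : R) (th : nat -> R) : R :=
  Rpower A (- a - 1) * exp (- b0 / A) *
  prodR n (fun i => Rpower A (- / 2) * exp (- (th i - mu) ^ 2 / (2 * A))
                    * exp (- (Y n i - th i) ^ 2 / (2 * V))).

From Stdlib Require Import Reals Lra Lia Classical FunctionalExtensionality.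
From Coquelicot Require Import Coquelicot.
Open Scope R_scope.

(* Integrating out each theta_i (a Gaussian convolution of variance A + V) and then mu leaves
   the posterior of A proportional to
     A^(-a-1) e^(-b0/A) (A+V)^(-(n-1)/2) e^(-Delta/(2(A+V)))
       = A^(-a-1) e^(-b0/A) exp (-(m/2) phi_s (A+V)),
   with m = n - 1, s = Delta / (n - 1) >= V + delta and phi_s u = ln u + s / u, which decreases
   on (0, s].  So the last factor is exponentially larger, in m, on [3 delta/4, delta] than on
   (0, delta/2].  In the integral of (1/A - 2/delta) times this density, the integrand is <= 0
   on [delta/2, oo) and <= -(2/(3 delta)) times the density on [3 delta/4, delta], while its
   part on (0, delta/2] is exponentially small; hence E[1/A] <= 2/delta for n large. *)

Lemma exp_le_exp_of_le x y : x <= y -> exp x <= exp y.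
Proof. intros [H|H]; [left; apply exp_increasing; auto | subst; lra]. Qed.

Lemma continuous_of_ex_derive (f : R -> R) x : ex_derive f x -> continuous f x.
Proof. exact (ex_derive_continuous (K := R_AbsRing) (V := R_NormedModule) f x). Qed.

Lemma RiemannInt_RInt f a b (pr : Riemann_integrable f a b) : RiemannInt pr = RInt f a b.
Proof. symmetry; apply RInt_Reals. Qed.

Lemma ex_RInt_cont (f : R -> R) a b :
  (forall z, Rmin a b <= z <= Rmax a b -> continuous f z) -> ex_RInt f a b.
Proof. exact (ex_RInt_continuous (V := R_CompleteNormedModule) f a b). Qed.

Lemma ex_RInt_cont_pos (f : R -> R) a b :
  (forall x, 0 < x -> continuous f x) -> 0 < a -> a <= b -> ex_RInt f a b.
Proof.
  intros Hc Ha Hab. apply ex_RInt_cont. intros z Hz.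
  rewrite Rmin_left in Hz by lra. apply Hc. lra.
Qed.

Lemma RInt_scal_R (f : R -> R) a b c :
  ex_RInt f a b -> RInt (fun t => c * f t) a b = c * RInt f a b.
Proof. exact (RInt_scal f a b c). Qed.

Lemma RInt_le_widen (f : R -> R) a b a' b' :
  (forall x, a' <= x <= b' -> continuous f x) -> (forall x, a' <= x <= b' -> 0 <= f x) ->
  a' <= a -> a <= b -> b <= b' -> RInt f a b <= RInt f a' b'.
Proof.
  intros Hc Hp H1 H2 H3.
  assert (Hex : forall c d, a' <= c -> c <= d -> d <= b' -> ex_RInt f c d).
  { intros c d ? ? ?. apply ex_RInt_cont. intros z Hz.
    rewrite Rmin_left in Hz by lra; rewrite Rmax_right in Hz by lra. apply Hc; lra. }
  rewrite <- (RInt_Chasles f a' a b') by (apply Hex; lra).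
  rewrite <- (RInt_Chasles f a b b') by (apply Hex; lra).
  assert (0 <= RInt f a' a) by (apply RInt_ge_0; [lra | apply Hex; lra | intros; apply Hp; lra]).
  assert (0 <= RInt f b b') by (apply RInt_ge_0; [lra | apply Hex; lra | intros; apply Hp; lra]).
  change (RInt f a b <= RInt f a' a + (RInt f a b + RInt f b b')). lra.
Qed.

Lemma bounded_sup (u : R -> R) B :
  (forall x, 1 <= x -> u x <= B) ->
  exists S, (forall x, 1 <= x -> u x <= S) /\
            (forall eps, 0 < eps -> exists x, 1 <= x /\ S - eps < u x).
Proof.
  intros Hb.
  set (E := fun y => exists x, 1 <= x /\ y = u x).
  destruct (completeness E) as [S [Hup Hlub]].
  - exists B. intros y [x [Hx ->]]. auto.
  - exists (u 1), 1. split; [lra | auto].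
  - exists S. split.
    + intros x Hx. apply Hup. exists x. auto.
    + intros eps Heps. apply NNPP; intro Hn.
      assert (S <= S - eps); [| lra].
      apply Hlub. intros y [x [Hx ->]]. apply Rnot_lt_le. intro. apply Hn. eauto.
Qed.

Lemma imp_int_R_intro (f : R -> R) l : (forall x, continuous f x) ->
  (forall eps, 0 < eps -> exists M, forall a b, a <= - M -> M <= b -> Rabs (RInt f a b - l) < eps) ->
  imp_int_R f l.
Proof.
  intros Hc H. split.
  - intros a b. constructor. apply ex_RInt_Reals_0, ex_RInt_cont. auto.
  - intros eps Heps. destruct (H eps Heps) as [M HM]. exists M.
    intros a b pr Ha Hb. rewrite RiemannInt_RInt. auto.
Qed.

Lemma imp_int_R_elim (f : R -> R) l : imp_int_R f l ->
  forall eps, 0 < eps -> exists M, forall a b, a <= - M -> M <= b -> Rabs (RInt f a b - l) < eps.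
Proof.
  intros [Hi H] eps Heps. destruct (H eps Heps) as [M HM]. exists M. intros a b Ha Hb.
  destruct (Hi a b) as [pr]. rewrite <- (RiemannInt_RInt _ _ _ pr). auto.
Qed.

Lemma imp_int_R_unique (f : R -> R) l1 l2 : imp_int_R f l1 -> imp_int_R f l2 -> l1 = l2.
Proof.
  intros H1 H2. apply Req_lt_aux. intros [e He]; simpl.
  destruct (imp_int_R_elim _ _ H1 (e / 2)) as [M1 HM1]; [lra |].
  destruct (imp_int_R_elim _ _ H2 (e / 2)) as [M2 HM2]; [lra |].
  set (M := Rmax M1 M2). assert (M1 <= M) by apply Rmax_l. assert (M2 <= M) by apply Rmax_r.
  specialize (HM1 (- M) M ltac:(lra) ltac:(lra)). specialize (HM2 (- M) M ltac:(lra) ltac:(lra)).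
  apply Rabs_def2 in HM1, HM2. apply Rabs_def1; lra.
Qed.

Lemma Rabs_scal_lt c x eps : 0 < eps -> Rabs x < eps / (Rabs c + 1) -> Rabs (c * x) < eps.
Proof.
  intros He Hx. pose proof (Rabs_pos c). pose proof (Rabs_pos x).
  rewrite Rabs_mult.
  assert (Rabs x * (Rabs c + 1) < eps).
  { apply (Rmult_lt_compat_r (Rabs c + 1)) in Hx; [| lra].
    unfold Rdiv in Hx. rewrite Rmult_assoc, Rinv_l in Hx; lra. }
  nra.
Qed.

Lemma Rdiv_Rabs_plus_1_pos eps c : 0 < eps -> 0 < eps / (Rabs c + 1).
Proof. intros. apply Rdiv_lt_0_compat; [| pose proof (Rabs_pos c)]; lra. Qed.

Lemma imp_int_R_scal c (f : R -> R) l : imp_int_R f l -> imp_int_R (fun t => c * f t) (c * l).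
Proof.
  intros H. pose proof (imp_int_R_elim _ _ H) as HE. destruct H as [Hi _].
  assert (Hex : forall a b, ex_RInt f a b).
  { intros a b. destruct (Hi a b) as [pr]. apply ex_RInt_Reals_1; exact pr. }
  split.
  - intros a b. constructor. apply ex_RInt_Reals_0. exact (ex_RInt_scal f a b c (Hex a b)).
  - intros eps Heps. destruct (HE _ (Rdiv_Rabs_plus_1_pos eps c Heps)) as [M HM].
    exists M. intros a b pr Ha Hb.
    rewrite RiemannInt_RInt, (RInt_scal_R f a b c (Hex a b)), <- Rmult_minus_distr_l.
    apply Rabs_scal_lt; auto.
Qed.

Lemma imp_int_R_of_bounded (f : R -> R) B :
  (forall x, continuous f x) -> (forall x, 0 <= f x) -> (forall a b, a <= b -> RInt f a b <= B) ->
  exists l, imp_int_R f l /\ (forall a b, a <= b -> RInt f a b <= l).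
Proof.
  intros Hc Hp HB.
  destruct (bounded_sup (fun x => RInt f (- x) x) B) as [S [HS1 HS2]].
  { intros x Hx. apply HB. lra. }
  assert (Hup : forall a b, a <= b -> RInt f a b <= S).
  { intros a b Hab. set (X := Rmax (Rmax (- a) b) 1).
    assert (- a <= X) by (eapply Rle_trans; [apply Rmax_l | apply Rmax_l]).
    assert (b <= X) by (eapply Rle_trans; [apply Rmax_r | apply Rmax_l]).
    assert (1 <= X) by apply Rmax_r.
    eapply Rle_trans; [| apply (HS1 X); lra].
    apply RInt_le_widen; auto; lra. }
  exists S. split; auto.
  apply imp_int_R_intro; auto. intros eps Heps.
  destruct (HS2 eps Heps) as [x0 [Hx0 Hlt]]. exists x0. intros a b Ha Hb.
  assert (RInt f (- x0) x0 <= RInt f a b) by (apply RInt_le_widen; auto; lra).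
  assert (RInt f a b <= S) by (apply Hup; lra).
  apply Rabs_def1; lra.
Qed.

Lemma imp_int_pos_intro (f : R -> R) l : (forall x, 0 < x -> continuous f x) ->
  (forall eps, 0 < eps -> exists d, 0 < d /\ exists M, forall a b, 0 < a -> a <= d -> M <= b ->
      Rabs (RInt f a b - l) < eps) ->
  imp_int_pos f l.
Proof.
  intros Hc H. split.
  - intros a b Ha Hab. constructor. apply ex_RInt_Reals_0, ex_RInt_cont_pos; auto.
  - intros eps Heps. destruct (H eps Heps) as [d [Hd [M HM]]]. exists d; split; auto.
    exists M. intros a b pr Ha Had Hb. rewrite RiemannInt_RInt. auto.
Qed.

Lemma imp_int_pos_elim (f : R -> R) l : imp_int_pos f l ->
  forall eps, 0 < eps -> exists d, 0 < d /\ exists M, forall a b, 0 < a -> a <= d -> M <= b ->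
      a <= b -> Rabs (RInt f a b - l) < eps.
Proof.
  intros [Hi H] eps Heps. destruct (H eps Heps) as [d [Hd [M HM]]]. exists d; split; auto.
  exists M. intros a b Ha Had Hb Hab.
  destruct (Hi a b Ha Hab) as [pr]. rewrite <- (RiemannInt_RInt _ _ _ pr). auto.
Qed.

Lemma imp_int_pos_ex_RInt (f : R -> R) l a b :
  imp_int_pos f l -> 0 < a -> a <= b -> ex_RInt f a b.
Proof. intros [Hi _] Ha Hab. destruct (Hi a b Ha Hab) as [pr]. apply ex_RInt_Reals_1; exact pr. Qed.

Lemma imp_int_pos_ext (f g : R -> R) l :
  (forall x, 0 < x -> f x = g x) -> imp_int_pos f l -> imp_int_pos g l.
Proof.
  intros Hfg H. pose proof (imp_int_pos_elim _ _ H) as HE.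
  assert (Hex : forall a b, 0 < a -> a <= b -> ex_RInt g a b /\ RInt g a b = RInt f a b).
  { intros a b Ha Hab.
    assert (He : forall x, Rmin a b < x < Rmax a b -> f x = g x).
    { intros x Hx. rewrite Rmin_left in Hx by lra. apply Hfg. lra. }
    split.
    - exact (ex_RInt_ext f g a b He (imp_int_pos_ex_RInt f l a b H Ha Hab)).
    - symmetry. apply RInt_ext. auto. }
  split.
  - intros a b Ha Hab. constructor. apply ex_RInt_Reals_0, Hex; auto.
  - intros eps Heps. destruct (HE eps Heps) as [d [Hd [M HM]]].
    exists d; split; auto. exists (Rmax M d). intros a b pr Ha Had Hb.
    assert (M <= b) by (eapply Rle_trans; [apply Rmax_l | eauto]).
    assert (d <= b) by (eapply Rle_trans; [apply Rmax_r | eauto]).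
    rewrite RiemannInt_RInt. destruct (Hex a b Ha ltac:(lra)) as [_ ->]. apply HM; auto; lra.
Qed.

Lemma imp_int_pos_scal c (f : R -> R) l :
  imp_int_pos f l -> imp_int_pos (fun t => c * f t) (c * l).
Proof.
  intros H. pose proof (imp_int_pos_elim _ _ H) as HE. split.
  - intros a b Ha Hab. constructor.
    apply ex_RInt_Reals_0. exact (ex_RInt_scal f a b c (imp_int_pos_ex_RInt f l a b H Ha Hab)).
  - intros eps Heps. destruct (HE _ (Rdiv_Rabs_plus_1_pos eps c Heps)) as [d [Hd [M HM]]].
    exists d; split; auto. exists (Rmax M d). intros a b pr Ha Had Hb.
    assert (M <= b) by (eapply Rle_trans; [apply Rmax_l | eauto]).
    assert (d <= b) by (eapply Rle_trans; [apply Rmax_r | eauto]).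
    rewrite RiemannInt_RInt, (RInt_scal_R f a b c (imp_int_pos_ex_RInt f l a b H Ha ltac:(lra))),
      <- Rmult_minus_distr_l.
    apply Rabs_scal_lt, HM; auto; lra.
Qed.

Lemma imp_int_pos_of_bounded (f : R -> R) B :
  (forall x, 0 < x -> continuous f x) -> (forall x, 0 < x -> 0 <= f x) ->
  (forall a b, 0 < a -> a <= b -> RInt f a b <= B) ->
  exists l, imp_int_pos f l /\ (forall a b, 0 < a -> a <= b -> RInt f a b <= l).
Proof.
  intros Hc Hp HB.
  assert (Hinv : forall x, 1 <= x -> 0 < / x <= 1).
  { intros x Hx. split; [apply Rinv_0_lt_compat; lra |].
    rewrite <- Rinv_1. apply Rinv_le_contravar; lra. }
  assert (Hwiden : forall a b a' b', 0 < a' -> a' <= a -> a <= b -> b <= b' ->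
                     RInt f a b <= RInt f a' b').
  { intros a b a' b' Ha' ? ? ?. apply RInt_le_widen; try lra; intros; [apply Hc | apply Hp]; lra. }
  destruct (bounded_sup (fun x => RInt f (/ x) x) B) as [S [HS1 HS2]].
  { intros x Hx. destruct (Hinv x Hx). apply HB; lra. }
  assert (Hup : forall a b, 0 < a -> a <= b -> RInt f a b <= S).
  { intros a b Ha Hab. set (X := Rmax (Rmax (/ a) b) 1).
    assert (/ a <= X) by (eapply Rle_trans; [apply Rmax_l | apply Rmax_l]).
    assert (b <= X) by (eapply Rle_trans; [apply Rmax_r | apply Rmax_l]).
    assert (1 <= X) by apply Rmax_r.
    assert (/ X <= a).
    { rewrite <- (Rinv_inv a). apply Rinv_le_contravar; auto. apply Rinv_0_lt_compat; lra. }
    destruct (Hinv X ltac:(lra)).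
    eapply Rle_trans; [apply (Hwiden _ _ (/ X) X) | apply HS1]; lra. }
  exists S. split; auto.
  apply imp_int_pos_intro; auto. intros eps Heps.
  destruct (HS2 eps Heps) as [x0 [Hx0 Hlt]]. destruct (Hinv x0 Hx0).
  exists (/ x0). split; [lra |]. exists x0. intros a b Ha Had Hb.
  assert (RInt f (/ x0) x0 <= RInt f a b) by (apply Hwiden; lra).
  assert (RInt f a b <= S) by (apply Hup; lra).
  apply Rabs_def1; lra.
Qed.

Lemma imp_int_pos_le_scal (f g : R -> R) l k c d Y :
  0 <= c -> 0 < d -> imp_int_pos f l -> imp_int_pos g k ->
  (forall x y, 0 < x -> x <= d -> Y <= y -> RInt f x y <= c * RInt g x y) ->
  l <= c * k.
Proof.
  intros Hc Hd Hf Hg Hfg. apply Rnot_lt_le. intro Hlt.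
  set (eps := (l - c * k) / (2 * (1 + c))).
  assert (Heps : 0 < eps) by (unfold eps; apply Rdiv_lt_0_compat; lra).
  destruct (imp_int_pos_elim _ _ Hf eps Heps) as [d1 [Hd1 [M1 HM1]]].
  destruct (imp_int_pos_elim _ _ Hg eps Heps) as [d2 [Hd2 [M2 HM2]]].
  set (x := Rmin (Rmin d1 d2) d). set (y := Rmax (Rmax M1 M2) (Rmax Y d)).
  assert (0 < x) by (unfold x; repeat apply Rmin_glb_lt; lra).
  assert (x <= d1) by (eapply Rle_trans; [apply Rmin_l | apply Rmin_l]).
  assert (x <= d2) by (eapply Rle_trans; [apply Rmin_l | apply Rmin_r]).
  assert (x <= d) by apply Rmin_r.
  assert (M1 <= y) by (eapply Rle_trans; [apply Rmax_l | apply Rmax_l]).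
  assert (M2 <= y) by (eapply Rle_trans; [apply Rmax_r | apply Rmax_l]).
  assert (Y <= y) by (eapply Rle_trans; [apply Rmax_l | apply Rmax_r]).
  assert (d <= y) by (eapply Rle_trans; [apply Rmax_r | apply Rmax_r]).
  specialize (HM1 x y ltac:(lra) ltac:(lra) ltac:(lra) ltac:(lra)).
  specialize (HM2 x y ltac:(lra) ltac:(lra) ltac:(lra) ltac:(lra)).
  specialize (Hfg x y ltac:(lra) ltac:(lra) ltac:(lra)).
  apply Rabs_def2 in HM1, HM2.
  assert (l - c * k < (1 + c) * eps) by nra.
  assert ((1 + c) * eps = (l - c * k) / 2) by (unfold eps; field; lra).
  lra.
Qed.

Definition gauss t := exp (- (t * t)).

Lemma gauss_continuous x : continuous gauss x.
Proof. apply continuous_of_ex_derive. unfold gauss. auto_derive. auto. Qed.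

Lemma gauss_le_inv_1_sq t : gauss t <= / (1 + t ^ 2).
Proof.
  unfold gauss. rewrite exp_Ropp. apply Rinv_le_contravar; [nra |].
  pose proof (exp_ineq1_le (t * t)). simpl; lra.
Qed.

Lemma RInt_inv_1_sq a b : RInt (fun t => / (1 + t ^ 2)) a b = atan b - atan a.
Proof.
  apply is_RInt_unique.
  apply (is_RInt_derive (V := R_CompleteNormedModule) atan (fun t => / (1 + t ^ 2))).
  - intros x _. apply is_derive_Reals, derivable_pt_lim_atan.
  - intros x _. apply continuous_of_ex_derive. auto_derive. nra.
Qed.

Lemma ex_imp_int_gauss : exists G, 0 < G /\ imp_int_R gauss G.
Proof.
  assert (Hc : forall a b, ex_RInt gauss a b).
  { intros. apply ex_RInt_cont. intros; apply gauss_continuous. }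
  destruct (imp_int_R_of_bounded gauss PI) as [G [HG Hle]].
  - apply gauss_continuous.
  - intros t. left; apply exp_pos.
  - intros a b Hab. eapply Rle_trans.
    + apply (RInt_le gauss (fun t => / (1 + t ^ 2))); auto.
      * apply ex_RInt_cont. intros. apply continuous_of_ex_derive. auto_derive. nra.
      * intros; apply gauss_le_inv_1_sq.
    + rewrite RInt_inv_1_sq. pose proof (atan_bound a). pose proof (atan_bound b). lra.
  - exists G. split; auto.
    eapply Rlt_le_trans; [| apply (Hle (-1) 1); lra].
    apply RInt_gt_0; [lra | intros; apply exp_pos | intros; apply gauss_continuous].
Qed.

Lemma imp_int_R_gauss_affine G al be : 0 < al -> imp_int_R gauss G ->
  imp_int_R (fun t => exp (- (al * (t - be) ^ 2))) (G / sqrt al).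
Proof.
  intros Hal HG.
  set (u := sqrt al). assert (Hu : 0 < u) by (apply sqrt_lt_R0; auto).
  assert (Huu : u * u = al) by (apply sqrt_sqrt; lra).
  replace (fun t => exp (- (al * (t - be) ^ 2))) with (fun t => gauss (u * t + - (u * be))).
  2: { apply functional_extensionality; intro t. unfold gauss. rewrite <- Huu. f_equal. ring. }
  assert (Hc : forall t, continuous (fun t => gauss (u * t + - (u * be))) t).
  { intros t. apply continuous_of_ex_derive. unfold gauss. auto_derive. auto. }
  apply imp_int_R_intro; auto. intros eps Heps.
  destruct (imp_int_R_elim _ _ HG (eps * u)) as [M0 HM0]; [nra |].
  exists (M0 / u + Rabs be). intros a b Ha Hb.
  assert (Hsubst : RInt (fun t => gauss (u * t + - (u * be))) a b
                   = / u * RInt gauss (u * a + - (u * be)) (u * b + - (u * be))).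
  { assert (Hlin : RInt (fun y => u * gauss (u * y + - (u * be))) a b
                   = RInt gauss (u * a + - (u * be)) (u * b + - (u * be))).
    { exact (RInt_comp_lin (V := R_CompleteNormedModule) gauss u (- (u * be)) a b
               ltac:(apply ex_RInt_cont; intros; apply gauss_continuous)). }
    rewrite RInt_scal_R in Hlin by (apply ex_RInt_cont; auto).
    rewrite <- Hlin, <- Rmult_assoc, Rinv_l, Rmult_1_l by lra. reflexivity. }
  rewrite Hsubst.
  assert (HMu : u * (M0 / u) = M0) by (field; lra).
  pose proof (Rle_abs be). pose proof (Rle_abs (- be)). rewrite Rabs_Ropp in *.
  specialize (HM0 (u * a + - (u * be)) (u * b + - (u * be)) ltac:(nra) ltac:(nra)).
  replace (/ u * RInt gauss (u * a + - (u * be)) (u * b + - (u * be)) - G / u)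
    with (/ u * (RInt gauss (u * a + - (u * be)) (u * b + - (u * be)) - G)) by (field; lra).
  rewrite Rabs_mult, Rabs_right by (left; apply Rinv_0_lt_compat; auto).
  apply (Rmult_lt_reg_l u); auto. rewrite <- Rmult_assoc, Rinv_r by lra. lra.
Qed.

Lemma imp_int_R_gauss_factor G al be c (f : R -> R) l : 0 < al -> imp_int_R gauss G ->
  (forall t, f t = c * exp (- (al * (t - be) ^ 2))) -> l = c * (G / sqrt al) ->
  imp_int_R f l.
Proof.
  intros Hal HG Hf ->.
  replace f with (fun t => c * exp (- (al * (t - be) ^ 2))) by (apply functional_extensionality; auto).
  apply imp_int_R_scal, imp_int_R_gauss_affine; auto.
Qed.

Lemma prodR_ext k (f g : nat -> R) :
  (forall i, (i < k)%nat -> f i = g i) -> prodR k f = prodR k g.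
Proof.
  induction k as [| k IH]; intros H; simpl; auto.
  rewrite IH, H; auto.
Qed.

Lemma iter_int_prodR (f : nat -> R -> R) (v : nat -> R) k :
  (forall i, (i < k)%nat -> imp_int_R (f i) (v i)) ->
  forall c F, (forall th, F th = c * prodR k (fun i => f i (th i))) ->
  iter_int k F (c * prodR k v).
Proof.
  induction k as [| k IH]; intros Hf c F HF.
  - simpl. rewrite HF. reflexivity.
  - exists (fun t => c * prodR k v * f k t). split.
    + intros t. replace (c * prodR k v * f k t) with (c * f k t * prodR k v) by ring.
      apply IH; [intros; apply Hf; lia |].
      intros th. rewrite HF. simpl. unfold upd at 2. rewrite Nat.eqb_refl.
      rewrite (prodR_ext k (fun i => f i (upd th k t i)) (fun i => f i (th i))); [ring |].
      intros i Hi. unfold upd. replace (Nat.eqb i k) with false; auto.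
      symmetry; apply Nat.eqb_neq; lia.
    + replace (c * prodR (S k) v) with (c * prodR k v * v k) by (simpl; ring).
      apply imp_int_R_scal, Hf. lia.
Qed.

Lemma iter_int_unique k : forall F l1 l2, iter_int k F l1 -> iter_int k F l2 -> l1 = l2.
Proof.
  induction k as [| k IH]; simpl; intros F l1 l2 H1 H2.
  - congruence.
  - destruct H1 as [g1 [H1 I1]], H2 as [g2 [H2 I2]].
    replace g2 with g1 in I2 by (apply functional_extensionality; intro t; eapply IH; eauto).
    eapply imp_int_R_unique; eauto.
Qed.

Lemma prodR_exp k K (x : nat -> R) : prodR k (fun i => K * exp (x i)) = K ^ k * exp (sumR k x).
Proof.
  induction k as [| k IH]; simpl.
  - rewrite exp_0. ring.
  - rewrite IH, exp_plus. ring.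
Qed.

Lemma sumR_affine k p r (f : nat -> R) :
  sumR k (fun i => p + r * f i) = INR k * p + r * sumR k f.
Proof. induction k as [| k IH]; cbn [sumR]; [simpl; ring | rewrite IH, S_INR; ring]. Qed.

Lemma sumR_sq_sub k (y : nat -> R) c :
  sumR k (fun i => (y i - c) ^ 2) = sumR k (fun i => y i ^ 2) - 2 * c * sumR k y + INR k * c ^ 2.
Proof. induction k as [| k IH]; cbn [sumR]; [simpl; ring | rewrite IH, S_INR; ring]. Qed.

Lemma DeltaY_shift Y n c : (0 < n)%nat ->
  sumR n (fun i => (Y n i - c) ^ 2) = DeltaY Y n + INR n * (c - Ybar Y n) ^ 2.
Proof.
  intros Hn. assert (0 < INR n) by (apply lt_0_INR; auto).
  unfold DeltaY. rewrite !sumR_sq_sub. unfold Ybar. field. lra.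
Qed.

Definition phi s u := ln u + s / u.

Definition marginal V b0 m s p A :=
  Rpower A (- p) * exp (- b0 / A) * exp (- (m / 2) * phi s (A + V)).

Definition theta_const G V := G * sqrt (2 * V).

Definition post_const G V n := theta_const G V ^ n * G * sqrt (2 / INR n).

Lemma post_const_pos G V n : 0 < G -> 0 < V -> (0 < n)%nat -> 0 < post_const G V n.
Proof.
  intros HG HV Hn. assert (0 < INR n) by (apply lt_0_INR; auto).
  assert (0 < theta_const G V) by (apply Rmult_lt_0_compat; auto; apply sqrt_lt_R0; lra).
  unfold post_const. repeat apply Rmult_lt_0_compat; auto using pow_lt.
  apply sqrt_lt_R0, Rdiv_lt_0_compat; lra.
Qed.

Lemma sqrt_exp_ln x : 0 < x -> sqrt x = exp (/ 2 * ln x).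
Proof. intros Hx. rewrite <- Rpower_sqrt by auto. reflexivity. Qed.

Lemma imp_int_R_theta G V A mu y : 0 < V -> 0 < A -> imp_int_R gauss G ->
  imp_int_R (fun t => Rpower A (- / 2) * exp (- (t - mu) ^ 2 / (2 * A)) * exp (- (y - t) ^ 2 / (2 * V)))
            (theta_const G V * exp (- / 2 * ln (A + V) + - / (2 * (A + V)) * (y - mu) ^ 2)).
Proof.
  intros HV HA HG.
  set (al := (A + V) / (2 * V * A)).
  assert (Hal : 0 < al) by (unfold al; apply Rdiv_lt_0_compat; nra).
  apply (imp_int_R_gauss_factor G al ((V * mu + A * y) / (A + V))
           (Rpower A (- / 2) * exp (- (y - mu) ^ 2 / (2 * (A + V))))); auto.
  - intros t. rewrite !Rmult_assoc, <- !exp_plus. do 2 f_equal. unfold al. field. lra.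
  - assert (Hln : ln al = ln (A + V) - (ln (2 * V) + ln A)).
    { unfold al. rewrite ln_div, ln_mult by nra. reflexivity. }
    unfold theta_const, Rpower, Rdiv. rewrite !sqrt_exp_ln by (auto; lra).
    rewrite <- exp_Ropp.
    transitivity (G * (exp (/ 2 * ln (2 * V)) * exp (- / 2 * ln (A + V) + - / (2 * (A + V)) * (y - mu) ^ 2)));
      [ring |].
    transitivity (G * (exp (- / 2 * ln A) * exp (- (y - mu) ^ 2 * / (2 * (A + V))) * exp (- (/ 2 * ln al))));
      [| ring].
    rewrite <- !exp_plus. do 2 f_equal. rewrite Hln. field. lra.
Qed.

Definition theta_exponent V Y n A mu :=
  sumR n (fun i => - / 2 * ln (A + V) + - / (2 * (A + V)) * (Y n i - mu) ^ 2).

Lemma iter_int_post_dens G V a b0 Y n A mu : 0 < V -> 0 < A -> imp_int_R gauss G ->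
  iter_int n (post_dens V a b0 Y n A mu)
    (Rpower A (- a - 1) * exp (- b0 / A) * (theta_const G V ^ n * exp (theta_exponent V Y n A mu))).
Proof.
  intros HV HA HG. unfold theta_exponent. rewrite <- prodR_exp.
  apply (iter_int_prodR (fun i t => Rpower A (- / 2) * exp (- (t - mu) ^ 2 / (2 * A))
                                     * exp (- (Y n i - t) ^ 2 / (2 * V)))).
  - intros i _. apply imp_int_R_theta; auto.
  - reflexivity.
Qed.

Lemma imp_int_R_mu G V a b0 Y n A : 0 < V -> 0 < A -> (2 <= n)%nat -> imp_int_R gauss G ->
  imp_int_R (fun mu => Rpower A (- a - 1) * exp (- b0 / A)
                       * (theta_const G V ^ n * exp (theta_exponent V Y n A mu)))
    (post_const G V n * marginal V b0 (INR (n - 1)) (DeltaY Y n / INR (n - 1)) (a + 1) A).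
Proof.
  intros HV HA Hn HG.
  assert (Hnn : 2 <= INR n) by (apply (le_INR 2); auto).
  rewrite minus_INR by lia. simpl (INR 1).
  set (nn := INR n) in *. set (u := A + V). set (D := DeltaY Y n).
  assert (Hu : 0 < u) by (unfold u; lra).
  set (al := nn / (2 * u)). assert (Hal : 0 < al) by (unfold al; apply Rdiv_lt_0_compat; lra).
  apply (imp_int_R_gauss_factor G al (Ybar Y n)
           (Rpower A (- a - 1) * exp (- b0 / A) * theta_const G V ^ n
            * exp (- (nn / 2) * ln u - D / (2 * u)))); auto.
  - intros mu. unfold theta_exponent. rewrite sumR_affine, DeltaY_shift by lia.
    fold u nn D. rewrite !Rmult_assoc. do 3 f_equal. rewrite <- exp_plus. f_equal.
    unfold al. field. lra.
  - assert (Hln : ln al = ln nn - (ln 2 + ln u)).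
    { unfold al. rewrite ln_div, ln_mult by lra. reflexivity. }
    unfold post_const, marginal, phi. fold nn u.
    rewrite (sqrt_exp_ln (2 / nn)) by (apply Rdiv_lt_0_compat; lra).
    rewrite (sqrt_exp_ln al), ln_div by lra.
    unfold Rdiv. rewrite <- exp_Ropp. replace (- (a + 1)) with (- a - 1) by ring.
    transitivity (Rpower A (- a - 1) * exp (- b0 * / A) * theta_const G V ^ n * G
                  * (exp (/ 2 * (ln 2 - ln nn)) * exp (- ((nn - 1) * / 2) * (ln u + D * / (nn - 1) * / u))));
      [ring |].
    transitivity (Rpower A (- a - 1) * exp (- b0 * / A) * theta_const G V ^ n * G
                  * (exp (- (nn * / 2) * ln u - D * / (2 * u)) * exp (- (/ 2 * ln al))));
      [| ring].
    rewrite <- !exp_plus. do 2 f_equal. rewrite Hln. field. lra.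
Qed.

Lemma post_int_ext n (F F' : R -> R -> (nat -> R) -> R) l :
  (forall A mu th, 0 < A -> F A mu th = F' A mu th) -> post_int n F l -> post_int n F' l.
Proof.
  intros HF [h [Hh Hpos]]. exists h. split; auto.
  intros A HA. destruct (Hh A HA) as [g [Hg Hi]]. exists g. split; auto.
  intros mu. replace (fun th => F' A mu th) with (fun th => F A mu th); auto.
  apply functional_extensionality; auto.
Qed.

Lemma inv_mul_post_dens V a b0 Y n A mu th : 0 < A ->
  / A * post_dens V a b0 Y n A mu th = post_dens V (a + 1) b0 Y n A mu th.
Proof.
  intros HA. unfold post_dens.
  replace (- (a + 1) - 1) with ((- a - 1) + - (1)) by ring.
  rewrite Rpower_plus, (Rpower_Ropp A 1), Rpower_1 by auto. ring.
Qed.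

Lemma post_int_marginal_iff G V a b0 Y n Z :
  0 < V -> (2 <= n)%nat -> 0 < G -> imp_int_R gauss G ->
  post_int n (post_dens V a b0 Y n) Z <->
  imp_int_pos (marginal V b0 (INR (n - 1)) (DeltaY Y n / INR (n - 1)) (a + 1)) (Z / post_const G V n).
Proof.
  intros HV Hn HG0 HG.
  set (C := post_const G V n). assert (HC : 0 < C) by (apply post_const_pos; auto; lia).
  set (r := marginal V b0 (INR (n - 1)) (DeltaY Y n / INR (n - 1)) (a + 1)).
  set (mu_int := fun A mu => Rpower A (- a - 1) * exp (- b0 / A)
                             * (theta_const G V ^ n * exp (theta_exponent V Y n A mu))).
  split.
  - intros [h [Hh Hpos]].
    assert (Hr : imp_int_pos (fun A => C * r A) Z).
    { apply (imp_int_pos_ext h); auto. intros A HA.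
      destruct (Hh A HA) as [g [Hg Hi]].
      replace g with (mu_int A) in Hi.
      - eapply imp_int_R_unique; [exact Hi | apply imp_int_R_mu; auto].
      - apply functional_extensionality; intro mu.
        eapply iter_int_unique; [apply iter_int_post_dens; auto | apply Hg]. }
    apply (imp_int_pos_scal (/ C)) in Hr.
    apply (imp_int_pos_ext (fun A => / C * (C * r A))).
    + intros A _. field. lra.
    + replace (Z / C) with (/ C * Z) by (field; lra). exact Hr.
  - intros Hr. exists (fun A => C * r A). split.
    + intros A HA. exists (mu_int A). split.
      * intros mu. apply iter_int_post_dens; auto.
      * apply imp_int_R_mu; auto.
    + replace Z with (C * (Z / C)) by (field; lra). apply imp_int_pos_scal, Hr.
Qed.

Lemma ln_le_sub_1 x : 0 < x -> ln x <= x - 1.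
Proof. intros Hx. pose proof (exp_ineq1_le (ln x)). rewrite exp_ln in *; lra. Qed.

Lemma ln_lt_sub_1 x : 1 < x -> ln x < x - 1.
Proof.
  intros Hx. assert (0 < ln x) by (rewrite <- ln_1; apply ln_increasing; lra).
  pose proof (exp_ineq1 (ln x) ltac:(lra)). rewrite exp_ln in *; lra.
Qed.

Lemma Rpower_exp_inv_bounded b0 p : 0 < b0 -> 0 < p ->
  exists B, 0 < B /\ forall A, 0 < A -> Rpower A (- p) * exp (- b0 / A) <= B.
Proof.
  intros Hb Hp.
  (* the value at the maximiser A = b0 / p *)
  exists (exp (p * ln p - p * ln b0 - p)). split; [apply exp_pos |].
  intros A HA. unfold Rpower. rewrite <- exp_plus. apply exp_le_exp_of_le.
  set (x := b0 / (p * A)). assert (Hx : 0 < x) by (unfold x; apply Rdiv_lt_0_compat; nra).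
  assert (Hl : ln x = ln b0 - (ln p + ln A)) by (unfold x; rewrite ln_div, ln_mult by nra; reflexivity).
  assert (Hpx : p * x = b0 / A) by (unfold x; field; lra).
  pose proof (Rmult_le_compat_l p _ _ ltac:(lra) (ln_le_sub_1 x Hx)).
  unfold Rdiv in *. nra.
Qed.

Lemma RInt_le_const (w : R -> R) a b K :
  a <= b -> ex_RInt w a b -> (forall x, a <= x <= b -> w x <= K) -> RInt w a b <= (b - a) * K.
Proof.
  intros Hab Hex Hw. replace ((b - a) * K) with (RInt (fun _ => K) a b) by (rewrite RInt_const; reflexivity).
  apply RInt_le; auto.
  - apply ex_RInt_const.
  - intros; apply Hw; lra.
Qed.

Lemma RInt_le_piecewise (w : R -> R) d U c x y :
  0 < d -> 0 <= U -> (forall A, 0 < A -> continuous w A) ->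
  (forall A, 0 < A <= d / 2 -> w A <= U) -> (forall A, d / 2 <= A -> w A <= 0) ->
  (forall A, 3 * d / 4 <= A <= d -> w A <= - c) ->
  0 < x -> x <= d / 2 -> d <= y -> RInt w x y <= d / 2 * U - d / 4 * c.
Proof.
  intros Hd HU Hc Hsmall Hlarge Hmid Hx Hxd Hy.
  assert (Hex : forall a b, 0 < a -> a <= b -> ex_RInt w a b) by (intros; apply ex_RInt_cont_pos; auto).
  rewrite <- (RInt_Chasles w x (d / 2) y), <- (RInt_Chasles w (d / 2) (3 * d / 4) y),
          <- (RInt_Chasles w (3 * d / 4) d y) by (apply Hex; lra).
  assert (I1 : RInt w x (d / 2) <= (d / 2 - x) * U) by (apply RInt_le_const; auto; intros; apply Hsmall; lra).
  assert (I2 : RInt w (d / 2) (3 * d / 4) <= (3 * d / 4 - d / 2) * 0)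
    by (apply RInt_le_const; try apply Hex; intros; try apply Hlarge; lra).
  assert (I3 : RInt w (3 * d / 4) d <= (d - 3 * d / 4) * - c)
    by (apply RInt_le_const; try apply Hex; intros; try apply Hmid; lra).
  assert (I4 : RInt w d y <= (y - d) * 0)
    by (apply RInt_le_const; try apply Hex; intros; try apply Hlarge; lra).
  change (RInt w x (d / 2) + (RInt w (d / 2) (3 * d / 4) + (RInt w (3 * d / 4) d + RInt w d y))
          <= d / 2 * U - d / 4 * c).
  nra.
Qed.

Lemma phi_gap s u u' : 0 < u -> u <= u' -> u' <= s ->
  phi s u' + (u' / u - 1 - ln (u' / u)) <= phi s u.
Proof.
  intros Hu Huu Hs. unfold phi. rewrite ln_div by lra.
  assert (E : s / u - s / u' - (u' / u - 1) = (s - u') * (u' - u) / (u * u')) by (field; lra).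
  assert (0 <= (s - u') * (u' - u) / (u * u')).
  { apply Rdiv_le_0_compat; [apply Rmult_le_pos |]; nra. }
  lra.
Qed.

Lemma phi_antitone s u u' : 0 < u -> u <= u' -> u' <= s -> phi s u' <= phi s u.
Proof.
  intros Hu Huu Hs. pose proof (phi_gap s u u' Hu Huu Hs).
  pose proof (ln_le_sub_1 (u' / u) ltac:(apply Rdiv_lt_0_compat; lra)). lra.
Qed.

Lemma exp_phi_separation u1 u2 K : 0 < u1 < u2 ->
  exists Mr, 0 <= Mr /\ forall m s, Mr <= m -> u2 <= s ->
    K * exp (- (m / 2) * phi s u1) <= exp (- (m / 2) * phi s u2).
Proof.
  intros Hu.
  set (c0 := u2 / u1 - 1 - ln (u2 / u1)).
  assert (Hc0 : 0 < c0).
  { assert (1 < u2 / u1) by (apply (Rmult_lt_reg_r u1); [lra | field_simplify; lra]).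
    pose proof (ln_lt_sub_1 (u2 / u1)). unfold c0. lra. }
  exists (2 * Rabs K / c0). split; [apply Rdiv_le_0_compat; [pose proof (Rabs_pos K) |]; lra |].
  intros m s Hm Hs. pose proof (Rabs_pos K).
  assert (Hm0 : 0 <= m) by (eapply Rle_trans; [| exact Hm]; apply Rdiv_le_0_compat; lra).
  assert (HKt : Rabs K <= m / 2 * c0).
  { apply (Rmult_le_compat_r c0) in Hm; [| lra]. unfold Rdiv in *.
    replace (2 * Rabs K * / c0 * c0) with (2 * Rabs K) in Hm by (field; lra). lra. }
  assert (Hexp : Rabs K <= exp (m / 2 * c0)) by (pose proof (exp_ineq1_le (m / 2 * c0)); lra).
  assert (Hphi : - (m / 2) * phi s u1 <= - (m / 2) * phi s u2 + - (m / 2 * c0)).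
  { pose proof (phi_gap s u1 u2 ltac:(lra) ltac:(lra) Hs). fold c0 in H0. nra. }
  apply exp_le_exp_of_le in Hphi. rewrite exp_plus, exp_Ropp in Hphi.
  pose proof (exp_pos (- (m / 2) * phi s u1)). pose proof (exp_pos (- (m / 2) * phi s u2)).
  pose proof (exp_pos (m / 2 * c0)).
  apply Rle_trans with (Rabs K * exp (- (m / 2) * phi s u1)); [pose proof (Rle_abs K); nra |].
  apply Rle_trans with (Rabs K * (exp (- (m / 2) * phi s u2) * / exp (m / 2 * c0))); [nra |].
  apply (Rmult_le_reg_r (exp (m / 2 * c0))); auto.
  replace (Rabs K * (exp (- (m / 2) * phi s u2) * / exp (m / 2 * c0)) * exp (m / 2 * c0))
    with (Rabs K * exp (- (m / 2) * phi s u2)) by (field; lra).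
  nra.
Qed.

Section Marginal.

Variables V b0 : R.
Hypotheses (HV : 0 < V) (Hb0 : 0 < b0).

Lemma marginal_continuous m s p A : 0 < A -> continuous (marginal V b0 m s p) A.
Proof.
  intros HA. apply continuous_of_ex_derive. unfold marginal, phi, Rpower.
  auto_derive. repeat split; lra.
Qed.

Lemma marginal_pos m s p A : 0 < marginal V b0 m s p A.
Proof. unfold marginal, Rpower. repeat apply Rmult_lt_0_compat; apply exp_pos. Qed.

Lemma marginal_succ m s p A : 0 < A -> marginal V b0 m s (p + 1) A = / A * marginal V b0 m s p A.
Proof.
  intros HA. unfold marginal.
  replace (- (p + 1)) with (- p + - (1)) by ring.
  rewrite Rpower_plus, (Rpower_Ropp A 1), Rpower_1 by auto. ring.
Qed.

Lemma marginal_le_inv_sq m s p : 4 <= m -> 0 <= s -> 0 < p ->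
  exists C, 0 < C /\ forall A, 0 < A -> marginal V b0 m s p A <= C * / ((A + V) * (A + V)).
Proof.
  intros Hm Hs Hp.
  destruct (Rpower_exp_inv_bounded b0 p Hb0 Hp) as [B [HB0 HB]].
  exists (B * exp (- ((m - 4) / 2) * ln V)). split; [apply Rmult_lt_0_compat; auto; apply exp_pos |].
  intros A HA. unfold marginal. set (u := A + V).
  assert (HL : ln V <= ln u) by (apply ln_le; unfold u; lra).
  assert (0 <= s / u) by (apply Rdiv_le_0_compat; unfold u; lra).
  assert (Hinv : / (u * u) = exp (- (2 * ln u))).
  { rewrite exp_Ropp. f_equal. replace (2 * ln u) with (ln u + ln u) by ring.
    rewrite exp_plus, exp_ln by (unfold u; lra). reflexivity. }
  rewrite (Rmult_assoc B), Hinv, <- exp_plus.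
  apply Rmult_le_compat; auto.
  - left; apply Rmult_lt_0_compat; [unfold Rpower |]; apply exp_pos.
  - left; apply exp_pos.
  - apply exp_le_exp_of_le. unfold phi.
    assert (0 <= (m - 4) / 2 * (ln u - ln V)) by (apply Rmult_le_pos; lra).
    assert (0 <= m / 2 * (s / u)) by (apply Rmult_le_pos; lra).
    nra.
Qed.

Lemma ex_imp_int_marginal m s p : 4 <= m -> 0 <= s -> 0 < p ->
  exists Q, 0 < Q /\ imp_int_pos (marginal V b0 m s p) Q.
Proof.
  intros Hm Hs Hp.
  destruct (marginal_le_inv_sq m s p Hm Hs Hp) as [C [HC Hle]].
  assert (Hcont : forall A, 0 < A -> continuous (marginal V b0 m s p) A) by apply marginal_continuous.
  destruct (imp_int_pos_of_bounded (marginal V b0 m s p) (C / V)) as [Q [HQ HQle]]; auto.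
  - intros A _. left; apply marginal_pos.
  - intros x y Hx Hxy.
    assert (Hprim : RInt (fun A => C * / ((A + V) * (A + V))) x y = C / (x + V) - C / (y + V)).
    { apply is_RInt_unique.
      replace (C / (x + V) - C / (y + V)) with (minus (- (C / (y + V))) (- (C / (x + V))))
        by (unfold minus, plus, opp; simpl; ring).
      apply (is_RInt_derive (V := R_CompleteNormedModule) (fun A => - (C / (A + V))));
        intros z Hz; rewrite Rmin_left in Hz by lra; rewrite Rmax_right in Hz by lra.
      - auto_derive; [lra | field; lra].
      - apply continuous_of_ex_derive. auto_derive. nra. }
    eapply Rle_trans.
    + apply (RInt_le _ (fun A => C * / ((A + V) * (A + V)))); auto.
      * apply ex_RInt_cont_pos; auto.
      * apply ex_RInt_cont_pos; auto. intros z Hz.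
        apply continuous_of_ex_derive. auto_derive. nra.
      * intros z Hz. apply Hle. lra.
    + rewrite Hprim.
      assert (C / (x + V) <= C / V).
      { apply Rmult_le_compat_l; [lra |]. apply Rinv_le_contravar; lra. }
      assert (0 <= C / (y + V)) by (apply Rdiv_le_0_compat; lra).
      lra.
  - exists Q. split; auto.
    eapply Rlt_le_trans; [| apply (HQle 1 2); lra].
    apply RInt_gt_0; [lra | intros; apply marginal_pos | intros; apply Hcont; lra].
Qed.

Lemma marginal_lower delta m s p A : 0 < delta -> 0 <= m -> 0 <= p -> V + delta <= s ->
  3 * delta / 4 <= A <= delta ->
  Rpower delta (- p) * exp (- b0 / (3 * delta / 4)) * exp (- (m / 2) * phi s (V + 3 * delta / 4))
  <= marginal V b0 m s p A.
Proof.
  intros Hd Hm Hp Hs HA. unfold marginal.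
  apply Rmult_le_compat; [| left; apply exp_pos | apply Rmult_le_compat |].
  - left; apply Rmult_lt_0_compat; [unfold Rpower |]; apply exp_pos.
  - left; unfold Rpower; apply exp_pos.
  - left; apply exp_pos.
  - unfold Rpower. apply exp_le_exp_of_le.
    assert (ln A <= ln delta) by (apply ln_le; lra). nra.
  - apply exp_le_exp_of_le. unfold Rdiv.
    assert (/ A <= / (3 * delta * / 4)) by (apply Rinv_le_contravar; lra).
    nra.
  - apply exp_le_exp_of_le.
    pose proof (phi_antitone s (V + 3 * delta / 4) (A + V) ltac:(lra) ltac:(lra) ltac:(lra)).
    nra.
Qed.

Lemma marginal_upper delta m s p B A : 0 <= m -> V + delta <= s ->
  (forall A, 0 < A -> Rpower A (- p) * exp (- b0 / A) <= B) -> 0 < A -> A <= delta / 2 ->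
  marginal V b0 m s p A <= B * exp (- (m / 2) * phi s (V + delta / 2)).
Proof.
  intros Hm Hs HB HA HAd. unfold marginal.
  apply Rmult_le_compat; auto.
  - left; apply Rmult_lt_0_compat; [unfold Rpower |]; apply exp_pos.
  - left; apply exp_pos.
  - apply exp_le_exp_of_le.
    pose proof (phi_antitone s (A + V) (V + delta / 2) ltac:(lra) ltac:(lra) ltac:(lra)).
    nra.
Qed.

Lemma marginal_succ_sub_nonpos delta m s p A : 0 < delta -> delta / 2 <= A ->
  marginal V b0 m s (p + 1) A - 2 / delta * marginal V b0 m s p A <= 0.
Proof.
  intros Hd HA. rewrite marginal_succ by lra.
  assert (/ A <= / (delta / 2)) by (apply Rinv_le_contravar; lra).
  replace (/ (delta / 2)) with (2 / delta) in * by (field; lra).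
  pose proof (marginal_pos m s p A). nra.
Qed.

Lemma marginal_succ_sub_deficit delta m s p A : 0 < delta -> 0 <= m -> 0 <= p -> V + delta <= s ->
  3 * delta / 4 <= A <= delta ->
  marginal V b0 m s (p + 1) A - 2 / delta * marginal V b0 m s p A
  <= - (2 / (3 * delta) * (Rpower delta (- p) * exp (- b0 / (3 * delta / 4))
                           * exp (- (m / 2) * phi s (V + 3 * delta / 4)))).
Proof.
  intros Hd Hm Hp Hs HA. rewrite marginal_succ by lra.
  pose proof (marginal_lower delta m s p A Hd Hm Hp Hs HA).
  assert (/ A <= / (3 * delta / 4)) by (apply Rinv_le_contravar; lra).
  assert (Hdeficit : / A - 2 / delta <= - (2 / (3 * delta))).
  { replace (- (2 / (3 * delta))) with (/ (3 * delta / 4) - 2 / delta) by (field; lra). lra. }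
  assert (0 < 2 / (3 * delta)) by (apply Rdiv_lt_0_compat; lra).
  pose proof (Rmult_le_compat_r _ _ _ (Rlt_le _ _ (marginal_pos m s p A)) Hdeficit).
  nra.
Qed.

Lemma RInt_marginal_succ_le delta p : 0 < delta -> 0 <= p ->
  exists Mr, forall m s, Mr <= m -> V + delta <= s ->
    forall x y, 0 < x -> x <= delta / 2 -> delta <= y ->
      RInt (marginal V b0 m s (p + 1)) x y <= 2 / delta * RInt (marginal V b0 m s p) x y.
Proof.
  intros Hd Hp.
  destruct (Rpower_exp_inv_bounded b0 (p + 1) Hb0 ltac:(lra)) as [B [HB0 HB]].
  set (L := Rpower delta (- p) * exp (- b0 / (3 * delta / 4))).
  assert (HL : 0 < L) by (apply Rmult_lt_0_compat; [unfold Rpower |]; apply exp_pos).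
  destruct (exp_phi_separation (V + delta / 2) (V + 3 * delta / 4) (3 * delta * B / L))
    as [Mr [HMr0 HMr]]; [lra |].
  exists Mr. intros m s Hm Hs x y Hx Hxd Hy.
  set (e1 := exp (- (m / 2) * phi s (V + delta / 2))).
  set (e2 := exp (- (m / 2) * phi s (V + 3 * delta / 4))).
  assert (Hsep : 3 * delta * B * e1 <= L * e2).
  { specialize (HMr m s Hm ltac:(lra)). fold e1 e2 in HMr.
    apply (Rmult_le_compat_l L) in HMr; [| lra].
    replace (L * (3 * delta * B / L * e1)) with (3 * delta * B * e1) in HMr by (field; lra).
    exact HMr. }
  set (r := marginal V b0 m s).
  assert (Hex : forall q, ex_RInt (r q) x y)
    by (intros; apply ex_RInt_cont_pos; try lra; intros; apply marginal_continuous; auto).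
  assert (Hlin : RInt (fun A => r (p + 1) A - 2 / delta * r p A) x y
                 = RInt (r (p + 1)) x y - 2 / delta * RInt (r p) x y).
  { rewrite <- RInt_scal_R by apply Hex.
    exact (RInt_minus (V := R_CompleteNormedModule) _ _ x y (Hex (p + 1))
             (ex_RInt_scal (V := R_CompleteNormedModule) _ x y (2 / delta) (Hex p))). }
  assert (Hint : RInt (fun A => r (p + 1) A - 2 / delta * r p A) x y
                 <= delta / 2 * (B * e1) - delta / 4 * (2 / (3 * delta) * (L * e2))).
  { apply RInt_le_piecewise; auto.
    - apply Rmult_le_pos; [lra | left; apply exp_pos].
    - intros A HA. apply continuous_of_ex_derive. unfold r, marginal, phi, Rpower.
      auto_derive. repeat split; lra.
    - intros A HA. assert (0 < 2 / delta) by (apply Rdiv_lt_0_compat; lra).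
      pose proof (marginal_pos m s p A).
      pose proof (marginal_upper delta m s (p + 1) B A ltac:(lra) Hs HB ltac:(lra) ltac:(lra)) as Hup.
      fold e1 in Hup. unfold r. nra.
    - intros A HA. apply marginal_succ_sub_nonpos; auto.
    - intros A HA. apply marginal_succ_sub_deficit; auto; lra. }
  assert (delta / 4 * (2 / (3 * delta) * (L * e2)) = L * e2 / 6) by (field; lra).
  nra.
Qed.

End Marginal.

Lemma post_int_inv_mul_iff V a b0 Y n Z :
  post_int n (fun A mu th => / A * post_dens V a b0 Y n A mu th) Z <->
  post_int n (post_dens V (a + 1) b0 Y n) Z.
Proof. split; apply post_int_ext; intros; rewrite inv_mul_post_dens; auto. Qed.

Lemma ex_post_int V a b0 Y n : 0 < V -> 0 < a -> 0 < b0 -> (2 <= n)%nat ->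
  4 <= INR (n - 1) -> 0 <= DeltaY Y n / INR (n - 1) ->
  exists Z Z1, 0 < Z /\ post_int n (post_dens V a b0 Y n) Z /\
    post_int n (fun A mu th => / A * post_dens V a b0 Y n A mu th) Z1.
Proof.
  intros HV Ha Hb0 Hn Hm Hs.
  destruct ex_imp_int_gauss as [G [HG0 HG]].
  set (C := post_const G V n). assert (HC : 0 < C) by (apply post_const_pos; auto; lia).
  destruct (ex_imp_int_marginal V b0 HV Hb0 _ _ (a + 1) Hm Hs) as [Q [HQ0 HQ]]; [lra |].
  destruct (ex_imp_int_marginal V b0 HV Hb0 _ _ (a + 1 + 1) Hm Hs) as [Q1 [_ HQ1]]; [lra |].
  exists (C * Q), (C * Q1). split; [nra | split].
  - apply (post_int_marginal_iff G); auto. fold C. replace (C * Q / C) with Q by (field; lra). exact HQ.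
  - apply post_int_inv_mul_iff, (post_int_marginal_iff G); auto.
    fold C. replace (C * Q1 / C) with Q1 by (field; lra). exact HQ1.
Qed.

Lemma post_int_inv_le V a b0 Y n delta : 0 < V -> 0 < delta -> (2 <= n)%nat ->
  (forall x y, 0 < x -> x <= delta / 2 -> delta <= y ->
     RInt (marginal V b0 (INR (n - 1)) (DeltaY Y n / INR (n - 1)) (a + 1 + 1)) x y
     <= 2 / delta * RInt (marginal V b0 (INR (n - 1)) (DeltaY Y n / INR (n - 1)) (a + 1)) x y) ->
  forall Z Z1, post_int n (post_dens V a b0 Y n) Z ->
    post_int n (fun A mu th => / A * post_dens V a b0 Y n A mu th) Z1 -> Z1 <= 2 / delta * Z.
Proof.
  intros HV Hd Hn Hle Z Z1 HZ HZ1.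
  destruct ex_imp_int_gauss as [G [HG0 HG]].
  set (C := post_const G V n). assert (HC : 0 < C) by (apply post_const_pos; auto; lia).
  apply (post_int_marginal_iff G) in HZ; auto.
  apply post_int_inv_mul_iff, (post_int_marginal_iff G) in HZ1; auto.
  assert (Z1 / C <= 2 / delta * (Z / C)).
  { refine (imp_int_pos_le_scal _ _ _ _ _ (delta / 2) delta _ _ HZ1 HZ Hle).
    - apply Rdiv_le_0_compat; lra.
    - lra. }
  replace Z1 with (C * (Z1 / C)) by (field; lra).
  replace (2 / delta * Z) with (C * (2 / delta * (Z / C))) by (field; lra).
  apply Rmult_le_compat_l; lra.
Qed.

Theorem mainTheorem10 :
  forall (V a b0 : R) (Y : nat -> nat -> R) (delta M : R) (N0 : nat),
    0 < V -> 0 < a -> 0 < b0 ->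
    (* Assumption (A) *)
    0 < delta ->
    (forall n : nat, (2 <= n)%nat -> DeltaY Y n / INR (n - 1) <= M) ->
    (forall n : nat, (2 <= n)%nat -> (N0 <= n)%nat ->
        V + delta <= DeltaY Y n / INR (n - 1)) ->
    exists N : nat, forall n : nat, (2 <= n)%nat -> (N <= n)%nat ->
      (* the posterior is proper and E_pi[1/A] is finite ... *)
      (exists Z Z1 : R, 0 < Z /\
         post_int n (post_dens V a b0 Y n) Z /\
         post_int n (fun A mu th => / A * post_dens V a b0 Y n A mu th) Z1) /\
      (* ... and E_pi[1/A] = Z1 / Z <= 2 / delta *)
      (forall Z Z1 : R,
         post_int n (post_dens V a b0 Y n) Z ->
         post_int n (fun A mu th => / A * post_dens V a b0 Y n A mu th) Z1 ->
         Z1 <= (2 / delta) * Z).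
Proof.
  intros V a b0 Y delta M N0 HV Ha Hb0 Hd _ HA.
  destruct (RInt_marginal_succ_le V b0 HV Hb0 delta (a + 1) Hd ltac:(lra)) as [Mr HMr].
  destruct (INR_unbounded (Mr + 1)) as [Nr HNr].
  exists (max N0 (max 5 Nr)). intros n Hn2 HnN.
  assert (Hm : 4 <= INR (n - 1) /\ Mr <= INR (n - 1)).
  { rewrite minus_INR by lia. pose proof (le_INR 5 n ltac:(lia)). pose proof (le_INR Nr n ltac:(lia)).
    simpl in *. lra. }
  assert (Hs : V + delta <= DeltaY Y n / INR (n - 1)) by (apply HA; lia).
  split.
  - apply ex_post_int; auto; lra.
  - apply post_int_inv_le; auto. intros x y Hx Hxd Hy. apply HMr; lra.
Qed.
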